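(* Let $\mathbb{K}$ be an algebraically closed field of characteristic zero, let $Y$ be an affine factorial variety over $\mathbb{K}$, and let $f\in\mathbb{K}[Y]$ be non-constant and non-invertible with $f=p_1^{a_1}\cdots p_s^{a_s}$, where $p_1,\dots,p_s$ are pairwise non-associated prime elements of $\mathbb{K}[Y]$ and $a_i\in\mathbb{Z}_{>0}$. Let $X=\{uv=f\}\subseteq\mathbb{A}^2_{u,v}\times Y$ and $\omega=(a_1,\dots,a_s)$. Then $\operatorname{Cl}(X)$ is torsion-free if and only if $\omega$ is a primitive vector of $\mathbb{Z}^s$ (i.e. $\gcd(a_1,\dots,a_s)=1$), equivalently, if and only if $f$ is not a proper power (there is no $k\ge2$ with $f=cg^k$ for some $g\in\mathbb{K}[Y]$ and invertible $c\in\mathbb{K}[Y]$). *)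

From HB Require Import structures.
From mathcomp Require Import all_boot all_order all_algebra.
From mathcomp Require Import mpoly.
From Stdlib Require Import ClassicalEpsilon.
Set Implicit Arguments. Unset Strict Implicit. Unset Printing Implicit Defensive.
Import Order.TTheory GRing.Theory Num.Theory.
Local Open Scope ring_scope.

Definition rdivides (R : comNzRingType) (a b : R) : Prop := exists c, b = c * a.

Definition prime_elt (R : comUnitRingType) (p : R) : Prop :=
  p != 0 /\ p \isn't a GRing.unit /\
  forall a b, rdivides p (a * b) -> rdivides p a \/ rdivides p b.

Definition associated (R : comUnitRingType) (a b : R) : Prop :=
  exists c, c \is a GRing.unit /\ a = c * b.

Definition factorial_domain (R : idomainType) : Prop :=
  forall x : R, x != 0 -> x \isn't a GRing.unit ->
    exists s : seq R, (forall p, p \in s -> prime_elt p) /\ x = \prod_(p <- s) p.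

Definition fin_gen_alg (K : fieldType) (R : comNzRingType)
  (iota : {rmorphism K -> R}) : Prop :=
  exists (n : nat) (phi : {rmorphism {mpoly K[n]} -> R}),
    (forall c, phi (mpolyC n c) = iota c) /\ (forall r, exists p, phi p = r).

Definition is_ideal (A : comNzRingType) (I : A -> Prop) : Prop :=
  I 0 /\ (forall x y, I x -> I y -> I (x + y)) /\ (forall a x, I x -> I (a * x)).

Definition prime_ideal (A : comNzRingType) (P : A -> Prop) : Prop :=
  is_ideal P /\ ~ P 1 /\ forall a b, P (a * b) -> P a \/ P b.

Definition height_one (A : comNzRingType) (P : A -> Prop) : Prop :=
  prime_ideal P /\ (exists x, P x /\ x != 0) /\
  forall Q : A -> Prop, prime_ideal Q -> (forall x, Q x -> P x) ->
    (forall x, Q x -> x = 0) \/ (forall x, P x -> Q x).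

Fixpoint ideal_pow (A : comNzRingType) (P : A -> Prop) (n : nat) : A -> Prop :=
  match n with
  | 0 => fun _ => True
  | m.+1 => fun x => exists s : seq (A * A),
      (forall pr, List.In pr s -> P pr.1 /\ ideal_pow P m pr.2) /\
      x = \sum_(pr <- s) pr.1 * pr.2
  end.

(* symbolic power P^(n) = P^n A_P ∩ A *)
Definition sym_pow (A : comNzRingType) (P : A -> Prop) (n : nat) (x : A) : Prop :=
  exists t, ~ P t /\ ideal_pow P n (t * x).

(* the order of x along the height-one prime P, i.e. the value at x of the
   discrete valuation of the (DVR) local ring A_P *)
Definition ordP (A : comNzRingType) (P : A -> Prop) (x : A) : nat :=
  epsilon (inhabits 0%N) (fun n => sym_pow P n x /\ ~ sym_pow P n.+1 x).

Definition weil_divisor (A : comNzRingType) (D : (A -> Prop) -> int) : Prop :=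
  (forall P, D P != 0 -> height_one P) /\
  exists s : seq (A -> Prop), forall P, D P != 0 -> List.In P s.

Definition principal_divisor (A : comNzRingType) (D : (A -> Prop) -> int) : Prop :=
  exists a b : A, a != 0 /\ b != 0 /\
    forall P, height_one P -> D P = (ordP P a)%:Z - (ordP P b)%:Z.

Definition class_group_torsion_free (A : comNzRingType) : Prop :=
  forall (D : (A -> Prop) -> int) (n : nat), weil_divisor D -> (0 < n)%N ->
    principal_divisor (fun P => D P *+ n) -> principal_divisor D.

From HB Require Import structures.
From mathcomp Require Import all_boot all_order all_algebra.
From mathcomp Require Import mpoly.
From mathcomp Require Import ring zify.
From Stdlib Require Import ClassicalEpsilon Classical FunctionalExtensionality PropExtensionality.
Set Implicit Arguments. Unset Strict Implicit. Unset Printing Implicit Defensive.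
Import Order.TTheory GRing.Theory Num.Theory.
Local Open Scope ring_scope.

Section Localization.
Variable A : comNzRingType.
Implicit Types (w g t x y : A) (P Q : A -> Prop).

Definition locdvd w g (n : nat) x : Prop := exists M y, w ^+ M * x = g ^+ n * y.

Definition locP w g : A -> Prop := locdvd w g 1.

Lemma locdvd0 w g x : locdvd w g 0 x.
Proof. by exists 0%N, x; rewrite !expr0. Qed.

Lemma locdvd_le w g m n x : (m <= n)%N -> locdvd w g n x -> locdvd w g m x.
Proof.
move=> mn [M [y E]]; exists M, (g ^+ (n - m) * y).
by rewrite E mulrA -exprD subnKC.
Qed.

Lemma locdvdD w g n x y : locdvd w g n x -> locdvd w g n y -> locdvd w g n (x + y).
Proof.
move=> [M [a Ea]] [N [b Eb]]; exists (M + N)%N, (w ^+ N * a + w ^+ M * b).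
transitivity (w ^+ N * (w ^+ M * x) + w ^+ M * (w ^+ N * y)); first by rewrite exprD; ring.
by rewrite Ea Eb; ring.
Qed.

Lemma locdvdMl w g n a x : locdvd w g n x -> locdvd w g n (a * x).
Proof. by move=> [M [y E]]; exists M, (a * y); rewrite mulrCA E; ring. Qed.

Lemma locdvdM w g m n x y :
  locdvd w g m x -> locdvd w g n y -> locdvd w g (m + n) (x * y).
Proof.
move=> [M [a Ea]] [N [b Eb]]; exists (M + N)%N, (a * b).
transitivity ((w ^+ M * x) * (w ^+ N * y)); first by rewrite exprD; ring.
by rewrite Ea Eb exprD; ring.
Qed.

Lemma locdvd_wpowM w g n N x : locdvd w g n (w ^+ N * x) <-> locdvd w g n x.
Proof.
split=> [[M [y E]]|[M [y E]]]; first by exists (M + N)%N, y; rewrite exprD -mulrA.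
by exists M, (w ^+ N * y); rewrite mulrCA E; ring.
Qed.

Lemma locdvd_unitMl w g e e' n x :
  e' * e = 1 -> locdvd w (e * g) n x <-> locdvd w g n x.
Proof.
move=> e'e; split=> [[M [y E]]|[M [y E]]].
  by exists M, (e ^+ n * y); rewrite E exprMn; ring.
exists M, (e' ^+ n * y); rewrite E.
transitivity (g ^+ n * ((e' * e) ^+ n * y)); first by rewrite e'e expr1n mul1r.
by rewrite !exprMn; ring.
Qed.

Lemma locP_unitMl w g e e' : e' * e = 1 -> locP w (e * g) = locP w g.
Proof.
move=> e'e; apply: functional_extensionality => x; apply: propositional_extensionality.
exact: locdvd_unitMl e'e.
Qed.

Lemma locP_prime_sub w g Q : prime_ideal Q -> ~ Q w -> Q g -> forall x, locP w g x -> Q x.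
Proof.
move=> [[_ [_ QM]] [Q1 QP]] Qw Qg x [M [y E]].
have : Q (w ^+ M * x) by rewrite E mulrC; apply: QM.
case/QP=> // wM; elim: M wM {E} => [|M IH]; first by rewrite expr0.
by rewrite exprS => /QP [].
Qed.

Lemma ideal_pow_mul P m a z : P a -> ideal_pow P m z -> ideal_pow P m.+1 (a * z).
Proof.
move=> Pa Pz; exists [:: (a, z)]; split; last by rewrite big_seq1.
by move=> pr [<-|[]].
Qed.

Lemma height_one_eq P Q : height_one P -> prime_ideal Q -> (exists2 x, Q x & x != 0) ->
  (forall x, Q x -> P x) -> P = Q.
Proof.
move=> [_ [_ Pmin]] HQ [x Qx x0] QP.
case: (Pmin Q HQ QP) => [Q0|PQ]; first by rewrite (Q0 x Qx) eqxx in x0.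
apply: functional_extensionality => y; apply: propositional_extensionality.
by split; [apply: PQ|apply: QP].
Qed.

Lemma prime_ideal_prod (I : eqType) P (F : I -> A) (s : seq I) :
  prime_ideal P -> P (\prod_(i <- s) F i) -> exists2 i, i \in s & P (F i).
Proof.
move=> [_ [P1 PP]]; elim: s => [|i s IH]; first by rewrite big_nil.
rewrite big_cons => /PP [Pi|/IH [j js Pj]]; first by exists i; rewrite ?mem_head.
by exists j; rewrite // in_cons js orbT.
Qed.

Lemma prime_idealX P x n : prime_ideal P -> P (x ^+ n) -> P x.
Proof.
move=> [_ [P1 PP]]; elim: n => [|n IH]; first by rewrite expr0.
by rewrite exprS => /PP [|/IH].
Qed.

Lemma prime_ideal_unit P x y : prime_ideal P -> y * x = 1 -> ~ P x.
Proof. by move=> [[_ [_ PM]] [P1 _]] yx Px; apply: P1; rewrite -yx; apply: PM. Qed.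

Definition uniformizer w g : Prop := [/\ g != 0,
  forall x y, locP w g (x * y) -> locP w g x \/ locP w g y,
  ~ locP w g 1 &
  forall x, x != 0 -> exists n, ~ locdvd w g n x].

Section Uniformizer.
Hypothesis mulA_eq0 : forall x y : A, x * y = 0 -> x = 0 \/ y = 0.
Variables w g : A.
Hypothesis gP : uniformizer w g.

Local Notation ord := (ordP (locP w g)).

Lemma locP_prime : prime_ideal (locP w g).
Proof.
have [_ locPM locP1 _] := gP; split; last by [].
split; first by exists 0%N, 0; rewrite !mulr0.
by split=> [x y|a x]; [apply: locdvdD|apply: locdvdMl].
Qed.

Lemma locP_g : locP w g g.
Proof. by exists 0%N, 1; rewrite mul1r mulr1. Qed.

Lemma locP_wpow M : ~ locP w g (w ^+ M).
Proof.
have [_ _ locP1 _] := gP; move=> wM; apply: locP1.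
by apply/(locdvd_wpowM _ _ _ M); rewrite mulr1.
Qed.

Lemma mulIgpow k x y : g ^+ k * x = g ^+ k * y -> x = y.
Proof.
have [g0 _ _ _] := gP; elim: k x y => [|k IH] x y; first by rewrite expr0 !mul1r.
rewrite exprSr -!mulrA => /IH /eqP; rewrite -subr_eq0 -mulrBr.
by move=> /eqP /mulA_eq0 [/eqP|/eqP]; rewrite ?(negPf g0) // subr_eq0 => /eqP.
Qed.

Lemma locdvd_cancel t n x : ~ locP w g t -> locdvd w g n (t * x) -> locdvd w g n x.
Proof.
have [_ locPM _ _] := gP; move=> Nt; elim: n x => [|n IH] x tx; first exact: locdvd0.
have [//|[M1 [x1 E1]]] := locPM _ _ (locdvd_le (ltn0Sn n) tx).
have [M [y E]] := tx.
have /IH [M2 [y2 E2]] : locdvd w g n (t * x1).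
  exists M, (w ^+ M1 * y); apply: (@mulIgpow 1).
  transitivity (w ^+ M * t * (g ^+ 1 * x1)); first ring.
  rewrite -E1; transitivity (w ^+ M1 * (w ^+ M * (t * x))); first ring.
  by rewrite E exprS; ring.
exists (M1 + M2)%N, y2; transitivity (w ^+ M2 * (w ^+ M1 * x)); first by rewrite exprD; ring.
rewrite E1; transitivity (g * (w ^+ M2 * x1)); first ring.
by rewrite E2 exprS mulrA.
Qed.

Lemma ideal_pow_locdvd n x : ideal_pow (locP w g) n x -> locdvd w g n x.
Proof.
elim: n x => [|n IH] x; first by move=> _; apply: locdvd0.
move=> [s [Hs ->]]; elim: s Hs => [|pr s IHs] Hs.
  by rewrite big_nil; exists 0%N, 0; rewrite !mulr0.
rewrite big_cons; apply: locdvdD; last by apply: IHs => pr' Hin; apply: Hs; right.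
have [H1 H2] := Hs pr (or_introl erefl).
by rewrite -add1n; apply: locdvdM => //; apply: IH.
Qed.

Lemma sym_pow_locdvd n x : sym_pow (locP w g) n x <-> locdvd w g n x.
Proof.
split=> [[t [Nt /ideal_pow_locdvd]]|[M [y E]]]; first exact: locdvd_cancel.
exists (w ^+ M); split; first exact: locP_wpow.
rewrite E; elim: n y {E} => [|n IH] y //=.
by rewrite exprS -mulrA; apply: ideal_pow_mul; [apply: locP_g|apply: IH].
Qed.

Lemma ordP_spec x : x != 0 -> locdvd w g (ord x) x /\ ~ locdvd w g (ord x).+1 x.
Proof.
have [_ _ _ fin] := gP; move=> /fin [m Nm].
have : exists n, sym_pow (locP w g) n x /\ ~ sym_pow (locP w g) n.+1 x.
  elim: m Nm => [|m IH] Nm; first by case: Nm; apply: locdvd0.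
  case: (classic (locdvd w g m x)) => [Cm|/IH //].
  by exists m; rewrite !sym_pow_locdvd.
by move=> /(epsilon_spec (inhabits 0%N)); rewrite !sym_pow_locdvd.
Qed.

Lemma ordP_locdvd n x : x != 0 -> locdvd w g n x <-> (n <= ord x)%N.
Proof.
move=> /ordP_spec [Cx Nx]; split=> [Cn|]; last by move/locdvd_le; apply.
by rewrite leqNgt; apply/negP => /locdvd_le /(_ Cn).
Qed.

Lemma ordP_eq n x : locdvd w g n x -> ~ locdvd w g n.+1 x -> ord x = n.
Proof.
move=> Cn Nn; have x0 : x != 0.
  by apply/eqP => x0; apply: Nn; rewrite x0; exists 0%N, 0; rewrite !mulr0.
apply/eqP; rewrite eqn_leq leqNgt; apply/andP; split; last exact/(ordP_locdvd n x0).
by apply/negP => /(ordP_locdvd n.+1 x0).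
Qed.

Lemma ordP_eq0 x : ~ locP w g x -> ord x = 0%N.
Proof. by move=> Nx; apply: ordP_eq => //; apply: locdvd0. Qed.

Lemma ordPM x y : x != 0 -> y != 0 -> ord (x * y) = (ord x + ord y)%N.
Proof.
move=> /ordP_spec [[M1 [x1 E1]] Nx] /ordP_spec [[M2 [y1 E2]] Ny].
apply: ordP_eq; first by apply: locdvdM; [exists M1, x1|exists M2, y1].
have Nx1 : ~ locP w g x1.
  by move=> [K [z Ez]]; apply: Nx; exists (K + M1)%N, z;
    rewrite exprD -mulrA E1 exprSr mulrCA Ez; ring.
have Ny1 : ~ locP w g y1.
  by move=> [K [z Ez]]; apply: Ny; exists (K + M2)%N, z;
    rewrite exprD -mulrA E2 exprSr mulrCA Ez; ring.
move=> [M [z Ez]]; have [_ locPM _ _] := gP; apply: (Nx1); case: (locPM x1 y1) => //.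
exists M, (w ^+ (M1 + M2) * z); apply: (@mulIgpow (ord x + ord y)).
transitivity (w ^+ M * ((g ^+ ord x * x1) * (g ^+ ord y * y1))); first by rewrite exprD; ring.
rewrite -E1 -E2; transitivity (w ^+ M1 * w ^+ M2 * (w ^+ M * (x * y))); first ring.
by rewrite Ez exprS !exprD; ring.
Qed.

Lemma ordP_unit x y : y * x = 1 -> ord x = 0%N.
Proof. by move=> yx; apply: ordP_eq0; apply: prime_ideal_unit locP_prime yx. Qed.

Lemma ordPX x n : x != 0 -> ord (x ^+ n) = (n * ord x)%N.
Proof.
move=> x0; elim: n => [|n IH]; first by rewrite (@ordP_unit _ 1) ?mulr1.
have xn0 : x ^+ n != 0.
  elim: (n) => [|k IHk]; first by rewrite expr0 oner_neq0.
  by rewrite exprS; apply/eqP => /mulA_eq0 [] /eqP; rewrite ?(negPf x0) ?(negPf IHk).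
by rewrite exprS ordPM // IH mulSn.
Qed.

Lemma ordP_wpowM M x : x != 0 -> ord (w ^+ M * x) = ord x.
Proof.
by move=> /ordP_spec [Cx Nx]; apply: ordP_eq; rewrite locdvd_wpowM.
Qed.

End Uniformizer.
End Localization.

Lemma ex_minn_prop (Q : nat -> Prop) :
  (exists n, Q n) -> exists n, Q n /\ forall m, (m < n)%N -> ~ Q m.
Proof.
case=> n; elim/ltn_ind: n => n IH Qn.
case: (classic (exists2 m, (m < n)%N & Q m)) => [[m mn Qm]|H]; first exact: IH Qm.
by exists n; split=> // m mn Qm; apply: H; exists m.
Qed.

Section Divisibility.
Variable S : idomainType.
Implicit Types a b c d e p q x y z : S.

Lemma rdvd_mulr a b c : rdivides a b -> rdivides a (b * c).
Proof. by move=> [d ->]; exists (d * c); ring. Qed.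

Lemma rdvd_mull a b c : rdivides a b -> rdivides a (c * b).
Proof. by move=> [d ->]; exists (c * d); ring. Qed.

Lemma rdvdD a b c : rdivides a b -> rdivides a c -> rdivides a (b + c).
Proof. by move=> [d ->] [e ->]; exists (d + e); ring. Qed.

Lemma rdvdB a b c : rdivides a b -> rdivides a c -> rdivides a (b - c).
Proof. by move=> [d ->] [e ->]; exists (d - e); ring. Qed.

Lemma rdvd0 a : rdivides a 0.
Proof. by exists 0; rewrite mul0r. Qed.

Lemma rdvdd a : rdivides a a.
Proof. by exists 1; rewrite mul1r. Qed.

Lemma rdvd_trans a b c : rdivides a b -> rdivides b c -> rdivides a c.
Proof. by move=> [d ->] [e ->]; exists (e * d); ring. Qed.

Lemma rdvd_sum (I : Type) (r : seq I) (P : pred I) (F : I -> S) a :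
  (forall i, P i -> rdivides a (F i)) -> rdivides a (\sum_(i <- r | P i) F i).
Proof. by move=> H; apply: big_ind => //; [apply: rdvd0|apply: rdvdD]. Qed.

Lemma prime_neq0 p : prime_elt p -> p != 0.
Proof. by case. Qed.

Lemma prime_ndvd_unit p e : prime_elt p -> e \is a GRing.unit -> ~ rdivides p e.
Proof.
move=> [_ [pN _]] eU [d Ed]; move: eU; rewrite Ed unitrM => /andP [_ pU].
by rewrite pU in pN.
Qed.

Lemma prime_rdvdX p x n : prime_elt p -> rdivides p (x ^+ n) -> rdivides p x.
Proof.
move=> Pp; elim: n => [|n IH]; first by rewrite expr0 => /(prime_ndvd_unit Pp (unitr1 S)).
by rewrite exprS => /(proj2 (proj2 Pp)) [|/IH].
Qed.

Lemma prime_rdvd_big (I : eqType) (r : seq I) (P : pred I) (F : I -> S) p :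
  prime_elt p -> rdivides p (\prod_(i <- r | P i) F i) ->
  exists i, [/\ i \in r, P i & rdivides p (F i)].
Proof.
move=> Pp; elim: r => [|i r IH]; first by rewrite big_nil => /(prime_ndvd_unit Pp (unitr1 S)).
rewrite big_cons; case: ifP => Pi; last by case/IH=> j [jr Pj pj]; exists j; rewrite in_cons jr orbT.
case/(proj2 (proj2 Pp)) => [pi|/IH [j [jr Pj pj]]]; first by exists i; rewrite mem_head.
by exists j; rewrite in_cons jr orbT.
Qed.

Lemma prime_rdvd_prime p q : prime_elt p -> prime_elt q -> rdivides p q ->
  exists2 e, e \is a GRing.unit & q = e * p.
Proof.
move=> [_ [pN _]] [q0 [_ Pq]] [d Ed].
have [[e Ee]|[e Ee]] : rdivides q d \/ rdivides q p by apply: Pq; rewrite -Ed; apply: rdvdd.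
  case/negP: pN; apply/unitrPr; exists e; apply: (mulfI q0).
  by transitivity (e * q * p); [ring|rewrite -Ee -Ed mulr1].
exists d => //; apply/unitrPr; exists e; apply: (mulfI q0).
by transitivity (d * (e * q)); [ring|rewrite -Ee -Ed mulr1].
Qed.

Lemma prime_rdvdX_cancel q w c n K : prime_elt q -> ~ rdivides q w ->
  rdivides (q ^+ n) (w ^+ K * c) -> rdivides (q ^+ n) c.
Proof.
move=> Pq qw; have qwK : ~ rdivides q (w ^+ K) by move/(prime_rdvdX Pq).
elim: n c => [|n IH] c; first by move=> _; exists c; rewrite expr0 mulr1.
move=> qnc; have [d Ed] := qnc; have : rdivides q (w ^+ K * c).
  by rewrite Ed exprS; exists (d * q ^+ n); ring.
case/(proj2 (proj2 Pq)) => [//|[c1 Ec]].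
have [d1 Ed1] : rdivides (q ^+ n) c1.
  apply: IH; exists d; apply: (mulIf (prime_neq0 Pq)).
  by rewrite -mulrA -Ec Ed exprSr; ring.
by exists d1; rewrite Ec Ed1 exprSr; ring.
Qed.

Definition factored z := exists c s, [/\ c \is a GRing.unit,
  forall x, x \in s -> prime_elt x & z = c * \prod_(x <- s) x].

Lemma factored_neq0 z : factored z -> z != 0.
Proof.
move=> [c [s [cU Ps ->]]]; rewrite mulf_neq0 //; first by apply: contraTneq cU => ->; rewrite unitr0.
by rewrite prodf_seq_neq0; apply/allP => x /Ps /prime_neq0.
Qed.

Lemma factoredM y z : factored y -> factored z -> factored (y * z).
Proof.
move=> [c [s [cU Ps ->]]] [d [t [dU Pt ->]]]; exists (c * d), (s ++ t).
split; first by rewrite unitrM cU dU.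
  by move=> x; rewrite mem_cat => /orP [/Ps|/Pt].
by rewrite big_cat /=; ring.
Qed.

Lemma factored_prime p : prime_elt p -> factored p.
Proof.
move=> Pp; exists 1, [:: p]; split; rewrite ?unitr1 ?big_seq1 ?mul1r //.
by move=> x; rewrite mem_seq1 => /eqP ->.
Qed.

Lemma factored_unit e : e \is a GRing.unit -> factored e.
Proof. by move=> eU; exists e, [::]; split; rewrite ?big_nil ?mulr1. Qed.

Lemma factored_cancel_prime z c s q y : c \is a GRing.unit ->
  (forall x, x \in s -> prime_elt x) -> z = c * \prod_(x <- s) x ->
  prime_elt q -> z = q * y ->
  exists c' s', [/\ c' \is a GRing.unit, forall x, x \in s' -> prime_elt x,
     y = c' * \prod_(x <- s') x & (size s').+1 = size s].
Proof.
move=> cU Ps Ez Pq Ey; have q0 := prime_neq0 Pq.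
have : rdivides q (\prod_(x <- s) x).
  apply: (@rdvd_trans _ z); first by rewrite Ey; exists y; rewrite mulrC.
  by rewrite Ez; exists c^-1; rewrite mulrA mulVr ?mul1r.
case/(prime_rdvd_big Pq) => x [xs _ /(prime_rdvd_prime Pq (Ps x xs)) [e eU Ex]].
exists (c * e), (rem x s); split.
- by rewrite unitrM cU.
- by move=> t /mem_rem /Ps.
- apply: (mulfI q0); rewrite -Ey Ez (big_rem x xs) /= Ex; ring.
- by rewrite size_rem // prednK // lt0n size_eq0; apply: contraTneq xs => ->.
Qed.

Lemma factored_cancel_pow z c s q n y : c \is a GRing.unit ->
  (forall x, x \in s -> prime_elt x) -> z = c * \prod_(x <- s) x ->
  prime_elt q -> z = q ^+ n * y ->
  exists c' s', [/\ c' \is a GRing.unit, forall x, x \in s' -> prime_elt x,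
     y = c' * \prod_(x <- s') x & (size s' + n)%N = size s].
Proof.
move=> cU Ps Ez Pq; elim: n y => [|n IH] y Ey.
  by exists c, s; rewrite addn0; split=> //; rewrite -[y]mul1r -(expr0 q) -Ey.
rewrite exprSr in Ey.
have [c1 [s1 [c1U Ps1 E1 H1]]] := IH (q * y) (etrans Ey (esym (mulrA _ _ _)) : _ = _).
have [c2 [s2 [c2U Ps2 E2 H2]]] := factored_cancel_prime c1U Ps1 E1 Pq erefl.
by exists c2, s2; split=> //; rewrite -H1 -H2 addnS.
Qed.

Lemma factored_bounded_pow z q : prime_elt q -> factored z ->
  exists n, ~ rdivides (q ^+ n) z.
Proof.
move=> Pq [c [s [cU Ps Ez]]]; exists (size s).+1 => [[y Ey]].
have [c' [s' [_ _ _]]] := factored_cancel_pow cU Ps Ez Pq (etrans Ey (mulrC _ _)).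
by rewrite addnS => /eqP; rewrite eqn_leq ltnNge leq_addl.
Qed.

Lemma factored_prime_factor x : factored x -> x \isn't a GRing.unit ->
  exists p y, prime_elt p /\ x = p * y.
Proof.
move=> [c [[|p s] [cU Ps ->]]]; first by rewrite big_nil mulr1 cU.
move=> _; exists p, (c * \prod_(q <- s) q); rewrite big_cons.
by split; [apply: Ps; rewrite mem_head|ring].
Qed.

(* Induction along factorizations: removing [k > 0] prime factors shortens them. *)
Lemma factored_ind (Pr : S -> Prop) :
  (forall x, factored x ->
     (forall p k y, prime_elt p -> (0 < k)%N -> x = p ^+ k * y -> Pr y) -> Pr x) ->
  forall x, factored x -> Pr x.
Proof.
move=> IH x [c [s [cU Ps Ex]]].
have [n sn] : exists n, (size s <= n)%N by exists (size s).
elim: n s sn x c cU Ps Ex => [|n IHn] s sn x c cU Ps Ex;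
  apply: IH; try by exists c, s.
- move=> p k y Pp k0 Ey; have [? [? [_ _ _ Hs]]] := factored_cancel_pow cU Ps Ex Pp Ey.
  by move: sn; rewrite -Hs; lia.
- move=> p k y Pp k0 Ey; have [c' [s' [c'U Ps' Ey' Hs]]] := factored_cancel_pow cU Ps Ex Pp Ey.
  by apply: (IHn s') Ey' => //; move: sn; rewrite -Hs; lia.
Qed.

Section UFD.
Hypothesis ufdS : factorial_domain S.

Lemma ufd_factored x : x != 0 -> factored x.
Proof.
move=> x0; case: (boolP (x \is a GRing.unit)) => xU; first exact: factored_unit.
have [s [Ps Ex]] := ufdS x0 xU; exists 1, s.
by split; rewrite ?unitr1 ?mul1r.
Qed.

Lemma ufd_prime_factor x : x != 0 -> x \isn't a GRing.unit ->
  exists p y, prime_elt p /\ x = p * y.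
Proof. by move/ufd_factored; apply: factored_prime_factor. Qed.

Lemma ufd_ind (Pr : S -> Prop) :
  (forall x, x != 0 -> (forall p y, prime_elt p -> x = p * y -> Pr y) -> Pr x) ->
  forall x, x != 0 -> Pr x.
Proof.
move=> IH x /ufd_factored; move: x; apply: factored_ind => x /factored_neq0 x0 IHx.
by apply: IH => // p y Pp Ey; apply: (IHx p 1%N) => //; rewrite expr1.
Qed.

End UFD.
End Divisibility.

Section PolyFactorial.
Variable R : idomainType.
Hypothesis ufdR : factorial_domain R.
Implicit Types (r lam : R) (c d g h G H : {poly R}).

Lemma rdvdC_coef r g : rdivides r%:P g <-> forall i, rdivides r g`_i.
Proof.
split=> [[c ->] i|]; first by exists c`_i; rewrite coefMC.
elim/poly_ind: g => [|g c IH] H; first exact: rdvd0.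
have [d Ed] : rdivides r%:P g.
  by apply: IH => i; have := H i.+1; rewrite coefD coefMX coefC /= addr0.
have [e Ee] : rdivides r c by have := H 0%N; rewrite coefD coefMX coefC /= add0r.
by exists (d * 'X + e%:P); rewrite Ed Ee polyCM; ring.
Qed.

(* Gauss: if [r] divides neither [g] nor [h], it divides neither the product
   of their first coefficients not divisible by [r], nor their product. *)
Lemma prime_eltC r : prime_elt r -> prime_elt r%:P.
Proof.
move=> Pr; have [r0 [rN rP]] := Pr; split; first by rewrite polyC_eq0.
split; first by rewrite poly_unitE coefC /= (negPf rN) andbF.
move=> g h rgh; apply: NNPP => /not_or_and [Ng Nh].
have [i [Ni Hi]] : exists i, ~ rdivides r g`_i /\ forall k, (k < i)%N -> ~ ~ rdivides r g`_k.
  by apply: ex_minn_prop; apply: not_all_ex_not => H; apply: Ng; apply/rdvdC_coef.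
have [j [Nj Hj]] : exists j, ~ rdivides r h`_j /\ forall k, (k < j)%N -> ~ ~ rdivides r h`_k.
  by apply: ex_minn_prop; apply: not_all_ex_not => H; apply: Nh; apply/rdvdC_coef.
have ij : (i < (i + j).+1)%N by rewrite ltnS leq_addr.
have := proj1 (rdvdC_coef _ _) rgh (i + j)%N.
rewrite coefM (bigD1 (Ordinal ij)) //= addKn => rsum.
have rrest : rdivides r (\sum_(k < (i + j).+1 | k != Ordinal ij) g`_k * h`_(i + j - k)).
  apply: rdvd_sum => k; rewrite -val_eqE /=; case: (ltngtP k i) => // [ki|ik] _.
    by apply: rdvd_mulr; apply: NNPP; apply: Hi.
  by apply: rdvd_mull; apply: NNPP; apply: Hj; have := ltn_ord k; lia.
by have := rdvdB rsum rrest; rewrite addrK => /rP [].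
Qed.

Lemma rdvdX_root c : rdivides 'X c <-> root c 0.
Proof.
split=> [[d ->]|/factor_theorem [d ->]]; first by rewrite rootM rootX eqxx orbT.
by exists d; rewrite subr0.
Qed.

Lemma poly_coef0_split c : exists d, c = d * 'X + (c`_0)%:P.
Proof.
have [d Ed] : rdivides 'X (c - (c`_0)%:P).
  by apply/rdvdX_root; rewrite rootE hornerD hornerN hornerC horner_coef0 subrr.
by exists d; rewrite -Ed subrK.
Qed.

Lemma prime_eltX : prime_elt ('X : {poly R}).
Proof.
split; first by rewrite polyX_eq0.
split; first by rewrite poly_unitE size_polyX.
by move=> g h /rdvdX_root; rewrite rootM => /orP [] /rdvdX_root; [left|right].
Qed.

Definition primitive c := forall r, prime_elt r -> ~ rdivides r%:P c.

Lemma primitive_rdvd c lam g h : primitive c -> lam != 0 ->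
  lam%:P * g = c * h -> rdivides c g.
Proof.
move=> Pc lam0; move: lam lam0 h; apply: (ufd_ind ufdR) => lam lam0 IH h E.
case: (boolP (lam \is a GRing.unit)) => lamU.
  exists (lam^-1%:P * h); transitivity ((lam^-1 * lam)%:P * g); first by rewrite mulVr ?mul1r.
  by rewrite polyCM -mulrA E; ring.
have [p [y [Pp Ey]]] := ufd_prime_factor ufdR lam0 lamU.
have p0 : p%:P != 0 by rewrite polyC_eq0 prime_neq0.
have [|/(Pc _ Pp)//|[h1 Eh]] := proj2 (proj2 (prime_eltC Pp)) c h.
  by rewrite -E Ey polyCM; exists (y%:P * g); ring.
apply: (IH p y Pp Ey h1); apply: (mulfI p0).
by rewrite mulrA -polyCM -Ey E Eh; ring.
Qed.

Definition indecomposable c := forall G H, c = G * H -> size G = 1%N \/ size H = 1%N.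

Lemma indecomposable_scale c lam G H : indecomposable c -> lam != 0 ->
  lam%:P * c = G * H -> size G = 1%N \/ size H = 1%N.
Proof.
move=> Ic lam0; move: lam lam0 G H; apply: (ufd_ind ufdR) => lam lam0 IH G H E.
case: (boolP (lam \is a GRing.unit)) => lamU.
  have := Ic (lam^-1%:P * G) H; rewrite size_Cmul ?invr_eq0 //; apply.
  by rewrite -mulrA -E mulrA -polyCM mulVr ?mul1r.
have [p [y [Pp Ey]]] := ufd_prime_factor ufdR lam0 lamU.
have p0 : p != 0 := prime_neq0 Pp.
have [|[G1 EG]|[H1 EH]] := proj2 (proj2 (prime_eltC Pp)) G H.
- by rewrite -E Ey polyCM; exists (y%:P * c); ring.
- rewrite EG mulrC size_Cmul //; apply: (IH p y Pp Ey); apply: (mulfI (x := p%:P)); rewrite ?polyC_eq0 //.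
  by rewrite mulrA -polyCM -Ey E EG; ring.
- rewrite EH mulrC size_Cmul //; apply: (IH p y Pp Ey); apply: (mulfI (x := p%:P)); rewrite ?polyC_eq0 //.
  by rewrite mulrA -polyCM -Ey E EH; ring.
Qed.


Lemma ideal_min_size_pdiv (J : {poly R} -> Prop) g :
  is_ideal J -> J g -> g != 0 -> (forall h, J h -> (size h < size g)%N -> h = 0) ->
  forall h, J h -> (lead_coef g ^+ scalp h g)%:P * h = (h %/ g) * g.
Proof.
move=> [_ [JD JM]] Jg g0 gmin h Jh; have E := Pdiv.Idomain.divp_eq h g.
suff : h %% g = 0 by rewrite mul_polyC E => ->; rewrite addr0.
apply: gmin; last by rewrite Pdiv.Idomain.ltn_modp.
have -> : h %% g = (lead_coef g ^+ scalp h g)%:P * h + (- (h %/ g)) * g.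
  by rewrite mul_polyC E; ring.
by apply: JD; apply: JM.
Qed.

(* The divisors [k] with [c | k h] form an ideal containing [g]; a nonzero
   element [m] of least size in it divides a multiple of [c] by a nonzero
   constant, and indecomposability forces [m] or the cofactor to be constant. *)
Lemma primitive_indecomposable_prime c : primitive c -> indecomposable c ->
  (1 < size c)%N -> prime_elt c.
Proof.
move=> Pc Ic Sc; have c0 : c != 0 by rewrite -size_poly_eq0 -lt0n ltnW.
split=> //; split; first by rewrite poly_unitE negb_and (gtn_eqF Sc).
move=> g h cgh; have [->|g0] := eqVneq g 0; first by left; apply: rdvd0.
pose J k := rdivides c (k * h).
have JI : is_ideal J.
  split; first by rewrite /J mul0r; apply: rdvd0.
  by split=> [k l Jk Jl|k l Jl]; rewrite /J ?mulrDl -?mulrA; [apply: rdvdD|apply: rdvd_mull].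
have [n [[m [m0 Jm Sm]] nmin]] : exists n, (exists m, [/\ m != 0, J m & size m = n]) /\
    forall n', (n' < n)%N -> ~ exists m, [/\ m != 0, J m & size m = n'].
  by apply: ex_minn_prop; exists (size g), g.
have mmin : forall k, J k -> (size k < size m)%N -> k = 0.
  by move=> k Jk; rewrite Sm => /nmin Nk; apply: NNPP => /eqP k0; apply: Nk; exists k.
have Jdiv := ideal_min_size_pdiv JI Jm m0 mmin.
have lc0 : forall k, lead_coef m ^+ scalp k m != 0 by move=> k; exact: Pdiv.Idomain.lc_expn_scalp_neq0.
have Jc : J c by apply: rdvd_mulr; apply: rdvdd.
have [/eqP/size_poly1P [k k0 Ek]|/eqP/size_poly1P [k k0 Ek]] := indecomposable_scale Ic (lc0 c) (Jdiv c Jc).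
  left; apply: (@primitive_rdvd c (k * lead_coef m ^+ scalp g m) g
    ((g %/ m) * (lead_coef m ^+ scalp c m)%:P) Pc); first by rewrite mulf_neq0.
  rewrite polyCM -mulrA Jdiv //.
  transitivity (g %/ m * ((lead_coef m ^+ scalp c m)%:P * c)); last by ring.
  by rewrite Jdiv // Ek; ring.
right; have [l El] := Jm; apply: (primitive_rdvd Pc k0).
by rewrite -Ek El mulrC.
Qed.


Lemma decomposable_size c : ~ indecomposable c -> c != 0 ->
  exists G H, [/\ c = G * H, (size G < size c)%N & (size H < size c)%N].
Proof.
move=> Nc c0; have [G NG] := not_all_ex_not _ _ Nc.
have [H NH] := not_all_ex_not _ _ NG; have [EGH NS] := imply_to_and _ _ NH; have [SG SH] := not_or_and _ _ NS.
have G0 : G != 0 by apply: contraNneq c0 => G0; rewrite EGH G0 mul0r.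
have H0 : H != 0 by apply: contraNneq c0 => H0; rewrite EGH H0 mulr0.
have := size_mul G0 H0; rewrite -EGH; move: G0 H0; rewrite -!size_poly_eq0.
by exists G, H; split=> //; lia.
Qed.

Lemma factored_polyC r : r != 0 -> factored r%:P.
Proof.
move: r; apply: (ufd_ind ufdR) => r r0 IH; case: (boolP (r \is a GRing.unit)) => rU.
  by apply: factored_unit; rewrite poly_unitE size_polyC r0 coefC.
have [p [y [Pp Er]]] := ufd_prime_factor ufdR r0 rU.
by rewrite Er polyCM; apply: factoredM; [apply: factored_prime; apply: prime_eltC|apply: IH Er].
Qed.

Lemma factored_primitive c : primitive c -> c != 0 ->
  (forall d, (size d < size c)%N -> d != 0 -> factored d) -> factored c.
Proof.
move=> Pc c0 IH; case: (leqP (size c) 1) => [Sc|Sc].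
  by have /size1_polyC Ec := Sc; rewrite Ec; apply: factored_polyC; rewrite -polyC_eq0 -Ec.
case: (classic (indecomposable c)) => [Ic|/decomposable_size /(_ c0) [G [H [EGH SG SH]]]].
  by apply: factored_prime; apply: primitive_indecomposable_prime.
have [G0 H0] : G != 0 /\ H != 0 by apply/andP; rewrite -negb_or -mulf_eq0 -EGH.
by rewrite EGH; apply: factoredM; apply: IH.
Qed.

Theorem factored_poly c : c != 0 -> factored c.
Proof.
have [n Sc] : exists n, size c = n by exists (size c).
elim/ltn_ind: n c Sc => n IHn c Sc c0.
suff : forall lam, lam != 0 -> forall d, lead_coef d = lam -> size d = n -> factored d.
  by move=> Hlc; apply: (Hlc (lead_coef c)); rewrite ?lead_coef_eq0.
apply: (ufd_ind ufdR) => lam lam0 IH d Ed Sd.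
case: (classic (exists p, prime_elt p /\ rdivides p%:P d)) => [[p [Pp [d1 Ed1]]]|Np].
  have p0 : p != 0 := prime_neq0 Pp.
  rewrite Ed1; apply: factoredM; last by apply: factored_prime; apply: prime_eltC.
  apply: (IH p (lead_coef d1)) => //; last by rewrite -Sd Ed1 mulrC size_Cmul.
  by rewrite -Ed Ed1 lead_coefM lead_coefC mulrC.
have d0 : d != 0 by rewrite -lead_coef_eq0 Ed.
apply: factored_primitive => // [p Pp pd|e]; first by apply: Np; exists p.
by rewrite Sd => /IHn; apply.
Qed.

End PolyFactorial.

Section UChart.
Variables (R : idomainType) (f : R) (A : comNzRingType).
Variable pi : {rmorphism {poly {poly R}} -> A}.
Hypothesis f0 : f != 0.
Hypothesis pi_surj : forall x : A, exists q, pi q = x.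
Hypothesis pi_ker : forall q, pi q = 0 <-> exists h, q = h * ('X%:P * 'X - (f%:P)%:P).

Local Notation uvf := ('X%:P * 'X - (f%:P)%:P : {poly {poly R}}).

Definition uA : A := pi 'X%:P.
Definition vA : A := pi 'X.
Definition embu : {rmorphism {poly R} -> A} := pi \o polyC.

Lemma embuX : embu 'X = uA. Proof. by []. Qed.

Lemma uAvA : uA * vA = embu f%:P.
Proof.
have : pi uvf = 0 by apply/pi_ker; exists 1; rewrite mul1r.
by rewrite rmorphB rmorphM /= => /eqP; rewrite subr_eq0 => /eqP.
Qed.

Lemma uApowM_embu (x : A) : exists N c, uA ^+ N * x = embu c.
Proof.
have [q <-] := pi_surj x; elim/poly_ind: q => [|q c [N [c' E]]].
  by exists 0%N, 0; rewrite !rmorph0 mulr0.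
exists N.+1, (c' * f%:P + 'X ^+ N.+1 * c).
transitivity ((uA ^+ N * pi q) * (uA * vA) + uA ^+ N.+1 * embu c).
  by rewrite rmorphD rmorphM exprS; ring.
by rewrite E uAvA -embuX -rmorphXn -!rmorphM -rmorphD.
Qed.

Lemma size_uvf : size uvf = 2%N.
Proof.
rewrite size_addl size_mulX ?polyC_eq0 ?polyX_eq0 ?size_polyC ?polyX_eq0 //.
by rewrite size_polyN (leq_ltn_trans (size_polyC_leq1 _)).
Qed.

Lemma embu_eq0 c : embu c = 0 -> c = 0.
Proof.
move=> /pi_ker [h Eh]; have [h0|h0] := eqVneq h 0.
  by apply/eqP; rewrite -polyC_eq0 Eh h0 mul0r.
have := size_polyC_leq1 c; rewrite Eh size_mul // -?size_poly_eq0 ?size_uvf // addn2 /=.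
by rewrite ltnS leqn0 size_poly_eq0 (negPf h0).
Qed.

Lemma embu_inj : injective embu.
Proof. by move=> c d E; apply/eqP; rewrite -subr_eq0; apply/eqP/embu_eq0; rewrite rmorphB E subrr. Qed.

Lemma embu_neq0 c : c != 0 -> embu c != 0.
Proof. by apply: contraNneq => /embu_eq0 ->. Qed.

Lemma uA_neq0 : uA != 0.
Proof. by rewrite -embuX embu_neq0 ?polyX_eq0. Qed.

(* [uvf] is not divisible by the prime ['X%:P] since its constant coefficient is [- f]. *)
Lemma uA_reg (x : A) : uA * x = 0 -> x = 0.
Proof.
have [q <-] := pi_surj x; rewrite -rmorphM => /pi_ker [h Eh].
have PX : prime_elt ('X%:P : {poly {poly R}}) by apply: prime_eltC; apply: prime_eltX.
have [|[h1 Eh1]|/rdvdC_coef /(_ 0%N)] := proj2 (proj2 PX) h uvf.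
- by rewrite -Eh; exists q; rewrite mulrC.
- apply/pi_ker; exists h1; apply: (mulfI (x := 'X%:P)); first by rewrite polyC_eq0 polyX_eq0.
  by rewrite Eh Eh1; ring.
- rewrite coefB coefMX coefC /= sub0r => /rdvdX_root.
  by rewrite coefC /= rootN rootC (negPf f0).
Qed.

Lemma uApow_reg N (x : A) : uA ^+ N * x = 0 -> x = 0.
Proof.
elim: N x => [|N IH] x; first by rewrite expr0 mul1r.
by rewrite exprS -mulrA => /uA_reg /IH.
Qed.

Lemma mulA_eq0 (x y : A) : x * y = 0 -> x = 0 \/ y = 0.
Proof.
move=> xy0; have [N [c Ec]] := uApowM_embu x; have [M [d Ed]] := uApowM_embu y.
have /embu_eq0 /eqP : embu (c * d) = 0.
  by rewrite rmorphM -Ec -Ed mulrACA -mulrA xy0 !mulr0.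
rewrite mulf_eq0 => /orP [/eqP c0|/eqP d0].
  by left; apply: (@uApow_reg N); rewrite Ec c0 rmorph0.
by right; apply: (@uApow_reg M); rewrite Ed d0 rmorph0.
Qed.


Definition uprime (q : {poly R}) := prime_elt q /\ ~ rdivides q 'X.

Lemma uprimeC r : prime_elt r -> uprime r%:P.
Proof.
move=> Pr; split; first exact: prime_eltC.
move=> /rdvdC_coef /(_ 1%N); rewrite coefX /=.
by have [_ [rN _]] := Pr; apply: prime_ndvd_unit Pr (unitr1 R).
Qed.

Lemma locdvd_embu q n c : uprime q ->
  locdvd uA (embu q) n (embu c) <-> rdivides (q ^+ n) c.
Proof.
move=> [Pq qX]; split=> [[M [y E]]|[d ->]]; last first.
  by exists 0%N, (embu d); rewrite expr0 mul1r rmorphM rmorphXn mulrC.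
have [N [y' Ey]] := uApowM_embu y.
apply: (prime_rdvdX_cancel (w := 'X) (K := (N + M)%N)) => //; exists y'.
apply: embu_inj; rewrite !rmorphM !rmorphXn embuX exprD -mulrA E mulrCA Ey.
by rewrite mulrC.
Qed.

(* Reading the coefficient of [u ^+ M] in [u ^+ M * x = r * y] on the line
   [v = 0], where [A] becomes [R[u] / (f)], shows that [r] divides the
   constant term of [x]. *)
Lemma locP_embuC_sub (P : A -> Prop) r : is_ideal P -> rdivides r f ->
  P uA -> P vA -> P (embu r%:P) -> forall x, locP uA (embu r%:P) x -> P x.
Proof.
move=> [P0 [PD PM]] rf Pu Pv Pr x [M [y]].
have [qx <-] := pi_surj x; have [qy <-] := pi_surj y; move=> E.
have /pi_ker [h Eh] : pi ('X%:P ^+ M * qx - (r%:P)%:P * qy) = 0.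
  by rewrite rmorphB !rmorphM rmorphXn E expr1 subrr.
have [t Et] : rdivides r ((qx`_0)`_0).
  have := congr1 (fun q : {poly {poly R}} => (q`_0)`_M) Eh.
  rewrite !coef0M coefB coef0M -polyC_exp !coefC /= coefB coefXnM ltnn subnn coefCM.
  rewrite coefCM coefB coefMX coefC /= sub0r mulrN coefN coefC /= coefMC => /eqP.
  rewrite subr_eq -mulNr => /eqP ->.
  by apply: rdvdD; [apply: rdvd_mull|apply: rdvd_mulr; apply: rdvdd].
have [d1 Ed1] := poly_coef0_split qx; have [d2 Ed2] := poly_coef0_split qx`_0.
have Ptr : P (embu (t * r)%:P) by rewrite polyCM rmorphM; apply: PM.
rewrite Ed1 Ed2 Et rmorphD rmorphM -[pi (_ %:P)]/(embu _) rmorphD rmorphM embuX.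
exact: PD (PM _ _ Pv) (PD _ _ (PM _ _ Pu) Ptr).
Qed.

Section Factorial.
Hypothesis ufdR : factorial_domain R.

Lemma uniformizer_uprime q : uprime q -> uniformizer uA (embu q).
Proof.
move=> qP; have [Pq _] := qP; split.
- exact/embu_neq0/prime_neq0.
- move=> x y; have [M [a Ea]] := uApowM_embu x; have [N [b Eb]] := uApowM_embu y.
  move=> /(iffRL (locdvd_wpowM _ _ _ (M + N) _)).
  rewrite exprD mulrACA Ea Eb -rmorphM locdvd_embu // expr1 => /(proj2 (proj2 Pq)) [qa|qb].
    by left; apply/(locdvd_wpowM _ _ _ M); rewrite Ea locdvd_embu // expr1.
  by right; apply/(locdvd_wpowM _ _ _ N); rewrite Eb locdvd_embu // expr1.
- by rewrite /locP -(rmorph1 embu) locdvd_embu // expr1; apply: prime_ndvd_unit (unitr1 _).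
- move=> x x0; have [N [c Ec]] := uApowM_embu x.
  have c0 : c != 0 by apply: contra_neq x0 => c0; apply: (@uApow_reg N); rewrite Ec c0 rmorph0.
  have [n Nn] := factored_bounded_pow Pq (factored_poly ufdR c0).
  by exists n; rewrite -(locdvd_wpowM _ _ _ N) Ec locdvd_embu.
Qed.


Lemma prime_ideal_embu_unit (P : A -> Prop) e : prime_ideal P ->
  e \is a GRing.unit -> ~ P (embu e).
Proof. by move=> HP eU; apply: (prime_ideal_unit (y := embu e^-1)) HP _; rewrite -rmorphM mulVr ?rmorph1. Qed.

Lemma uprime_in_prime (P : A -> Prop) y : prime_ideal P -> ~ P uA -> P y -> y != 0 ->
  exists2 q, uprime q & P (embu q).
Proof.
move=> HP Pu Py y0; have [[_ [_ PM]] [_ PP]] := HP.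
have [N [c Ec]] := uApowM_embu y.
have c0 : c != 0 by apply: contra_neq y0 => c0; apply: (@uApow_reg N); rewrite Ec c0 rmorph0.
have [e [s [eU Ps Ecs]]] := factored_poly ufdR c0.
have : P (embu c) by rewrite -Ec; apply: PM.
rewrite Ecs rmorphM => /PP [/(prime_ideal_embu_unit HP eU) //|].
rewrite rmorph_prod => /(prime_ideal_prod HP) [x xs Px]; exists x => //.
split=> [|/(prime_rdvd_prime (Ps x xs) (@prime_eltX R)) [e' e'U EX]]; first exact: Ps.
by apply: Pu; rewrite -embuX EX rmorphM; apply: PM.
Qed.

Lemma height_one_uprime q : uprime q -> height_one (locP uA (embu q)).
Proof.
move=> qP; have uq := uniformizer_uprime qP; split; first exact: locP_prime.
split; first by exists (embu q); split; [apply: locP_g|case: uq].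
move=> Q HQ QP; case: (classic (exists2 y, Q y & y != 0)) => [[y Qy y0]|Q0]; last first.
  by left=> y Qy; apply: NNPP => /eqP y0; apply: Q0; exists y.
right; have Qu : ~ Q uA by move/QP; rewrite -[uA]expr1; apply: locP_wpow.
have [q' q'P Qq'] := uprime_in_prime HQ Qu Qy y0.
have /locdvd_embu : locP uA (embu q) (embu q') by apply: QP.
move=> /(_ qP); rewrite expr1 => /(prime_rdvd_prime qP.1 q'P.1) [e eU Eq'].
apply: locP_prime_sub => //; move: Qq'; rewrite Eq' rmorphM.
by case/(proj2 (proj2 HQ)) => // /(prime_ideal_embu_unit HQ eU).
Qed.

Lemma height_one_uA_free (P : A -> Prop) : height_one P -> ~ P uA ->
  exists2 q, uprime q & P = locP uA (embu q).
Proof.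
move=> HP Pu; have [PP [[y [Py y0]] _]] := HP.
have [q qP Pq] := uprime_in_prime PP Pu Py y0; exists q => //.
have uq := uniformizer_uprime qP; apply: height_one_eq => //; first exact: locP_prime.
  by exists (embu q); [apply: locP_g|case: uq].
exact: locP_prime_sub.
Qed.


Lemma ordP_uprimeM q c d : uprime q -> c != 0 -> d != 0 ->
  ordP (locP uA (embu q)) (embu (c * d)) =
  (ordP (locP uA (embu q)) (embu c) + ordP (locP uA (embu q)) (embu d))%N.
Proof.
by move=> qP c0 d0; rewrite rmorphM (ordPM mulA_eq0 (uniformizer_uprime qP)) ?embu_neq0.
Qed.

(* Peel prime factors of [z] off one at a time: a factor associated to ['X]
   contributes to the power of ['X]; any other prime factor [x] occurs in
   [z] with multiplicity at least [n], so [x ^+ n] can be split off. *)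
Lemma dvd_ordP_factor z n : z != 0 -> (0 < n)%N ->
  (forall q, uprime q -> (n %| ordP (locP uA (embu q)) (embu z))%N) ->
  exists h e al, e \is a GRing.unit /\ z = e * 'X ^+ al * h ^+ n.
Proof.
move=> /(factored_poly ufdR) zF n0; move: z zF; apply: factored_ind => z zF IH Hz.
have z0 := factored_neq0 zF.
case: (boolP (z \is a GRing.unit)) => zU.
  by exists 1, z, 0%N; rewrite expr1n expr0 !mulr1.
have [x [y [Px Ez]]] := factored_prime_factor zF zU.
have [x0 y0] : x != 0 /\ y != 0 by apply/andP; rewrite -negb_or -mulf_eq0 -Ez.
case: (classic (rdivides x 'X)) => [|xN].
  case/(prime_rdvd_prime Px (@prime_eltX R)) => e eU EX.
  have Ez' : z = 'X ^+ 1 * (e^-1 * y).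
    by rewrite Ez EX expr1; transitivity ((e^-1 * e) * x * y); [rewrite mulVr ?mul1r|ring].
  have [|h [e' [al [e'U Ey]]]] := IH _ _ _ (@prime_eltX R) (ltn0Sn 0) Ez'.
    move=> q qP; have e0 : e != 0 by apply: contraTneq eU => ->; rewrite unitr0.
    have := Hz q qP; rewrite Ez' rmorphM rmorphXn embuX.
    by rewrite (ordP_wpowM mulA_eq0 (uniformizer_uprime qP)) // embu_neq0 // mulf_neq0 ?invr_eq0.
  by exists h, e', al.+1; split=> //; rewrite Ez' Ey (exprS _ al) expr1; ring.
have xP : uprime x by [].
have ordx := ordP_locdvd mulA_eq0 (uniformizer_uprime xP) _ (embu_neq0 z0).
have ox : (0 < ordP (locP uA (embu x)) (embu z))%N.
  by apply/ordx/locdvd_embu; rewrite // expr1 Ez; exists y; rewrite mulrC.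
have [w Ew] : rdivides (x ^+ n) z by apply/(locdvd_embu _ _ xP)/ordx/dvdn_leq/Hz.
have [|h [e [al [eU Ew']]]] := IH _ _ w Px n0 (etrans Ew (mulrC _ _)).
  move=> q qP; have w0 : w != 0 by apply: contraNneq z0 => w0; rewrite Ew w0 mul0r.
  have := Hz q qP; rewrite Ew ordP_uprimeM ?expf_neq0 // rmorphXn.
  by rewrite (ordPX mulA_eq0 (uniformizer_uprime qP)) ?embu_neq0 // (dvdn_addl _ (dvdn_mulr _ (dvdnn n))).
by exists (h * x), e, al; split=> //; rewrite Ew Ew' exprMn; ring.
Qed.

End Factorial.
End UChart.

Lemma dvdn_int (n m : nat) (k : int) : m%:Z = k * n%:Z -> (n %| m)%N.
Proof. by move=> E; rewrite -(absz_nat m) -(absz_nat n) -dvdzE E dvdz_mull. Qed.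

Lemma dvdn_biggcd_mul (I : finType) (F : I -> nat) n k :
  (\big[gcdn/0]_(i : I) F i = 1)%N -> (forall i, n %| k * F i)%N -> (n %| k)%N.
Proof.
move=> g1 H; rewrite -[k]muln1 -g1 (big_morph (muln k) (muln_gcdr k) (muln0 k)).
by apply/dvdn_biggcdP => i _; apply: H.
Qed.

Lemma In_map_mem (T : eqType) (U : Type) (F : T -> U) x (r : seq T) :
  x \in r -> List.In (F x) (map F r).
Proof. by elim: r => // y r IH; rewrite in_cons => /orP [/eqP ->|/IH]; [left|right]. Qed.

Section ClassGroup.
Variables (R : idomainType) (f : R) (A : comNzRingType).
Variable pi : {rmorphism {poly {poly R}} -> A}.
Hypothesis ufdR : factorial_domain R.
Hypothesis f0 : f != 0.
Hypothesis pi_surj : forall x : A, exists q, pi q = x.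
Hypothesis pi_ker : forall q, pi q = 0 <-> exists h, q = h * ('X%:P * 'X - (f%:P)%:P).

Variables (s : nat) (p : 'I_s -> R) (a : 'I_s -> nat).
Hypothesis p_prime : forall i, prime_elt (p i).
Hypothesis p_nonassoc : forall i j, i != j -> ~ associated (p i) (p j).
Hypothesis a_pos : forall i, (0 < a i)%N.
Hypothesis f_nonunit : f \isn't a GRing.unit.
Hypothesis f_fact : f = \prod_(i < s) p i ^+ a i.

Local Notation u := (uA pi).
Local Notation v := (vA pi).
Local Notation kap r := (embu pi r%:P).

(* Swapping the variables exchanges the roles of [u] and [v]. *)
Let piv : {rmorphism {poly {poly R}} -> A} := pi \o swapXY.

Lemma piv_surj x : exists q, piv q = x.
Proof. by have [q <-] := pi_surj x; exists (swapXY q); rewrite /= swapXYK. Qed.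

Lemma piv_ker q : piv q = 0 <-> exists h, q = h * ('X%:P * 'X - (f%:P)%:P).
Proof.
have swap_uvf h : swapXY (h * ('X%:P * 'X - (f%:P)%:P)) = swapXY h * ('X%:P * 'X - (f%:P)%:P).
  by rewrite !rmorphM rmorphB rmorphM /= swapXY_X swapXY_Y swapXY_polyC map_polyC [_ * 'X]mulrC.
rewrite pi_ker; split=> [[h Eh]|[h ->]]; exists (swapXY h); last exact: swap_uvf.
by rewrite -[q]swapXYK Eh swap_uvf.
Qed.

Lemma uA_piv : uA piv = v.
Proof. by rewrite /uA /= swapXY_Y. Qed.

Lemma vA_piv : vA piv = u.
Proof. by rewrite /vA /= swapXY_X. Qed.

Lemma embu_pivC r : embu piv r%:P = kap r.
Proof. by rewrite /= swapXY_polyC map_polyC. Qed.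

Let domA := mulA_eq0 f0 pi_surj pi_ker.

Local Notation PU q := (locP u (embu pi q)).
Local Notation PV r := (locP v (kap r)).

Lemma PV_piv r : PV r = locP (uA piv) (embu piv r%:P).
Proof. by rewrite uA_piv embu_pivC. Qed.

Lemma uniformizer_PU q : uprime q -> uniformizer u (embu pi q).
Proof. by move=> qP; have := uniformizer_uprime f0 pi_surj pi_ker ufdR qP. Qed.

Lemma uniformizer_PV r : prime_elt r -> uniformizer v (kap r).
Proof.
move=> Pr; rewrite -uA_piv -embu_pivC.
by have := uniformizer_uprime f0 piv_surj piv_ker ufdR (uprimeC Pr).
Qed.

Lemma height_one_PU q : uprime q -> height_one (PU q).
Proof. by move=> qP; have := height_one_uprime f0 pi_surj pi_ker ufdR qP. Qed.

Lemma height_one_PV r : prime_elt r -> height_one (PV r).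
Proof.
by move=> Pr; rewrite PV_piv; have := height_one_uprime f0 piv_surj piv_ker ufdR (uprimeC Pr).
Qed.



Lemma PV_kap r t : prime_elt r -> PV r (kap t) -> rdivides r t.
Proof.
move=> Pr; rewrite PV_piv -embu_pivC /locP.
move=> /(locdvd_embu piv_surj piv_ker _ _ (uprimeC Pr)).
by rewrite expr1 => /rdvdC_coef /(_ 0%N); rewrite !coefC.
Qed.

Lemma ordPU_u q : uprime q -> ordP (PU q) u = 0%N.
Proof.
move=> qP; apply: (ordP_eq0 domA (uniformizer_PU qP)).
exact: (locP_wpow (uniformizer_PU qP) (M := 1)).
Qed.

Lemma ordPV_v r : prime_elt r -> ordP (PV r) v = 0%N.
Proof.
move=> Pr; apply: (ordP_eq0 domA (uniformizer_PV Pr)).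
exact: (locP_wpow (uniformizer_PV Pr) (M := 1)).
Qed.

Definition cofactor j := \prod_(i < s | i != j) p i ^+ a i.

Lemma f_cofactor j : f = p j ^+ a j * cofactor j.
Proof. by rewrite f_fact (bigD1 j). Qed.

Lemma prime_ndvd_cofactor j : ~ rdivides (p j) (cofactor j).
Proof.
case/(prime_rdvd_big (p_prime j)) => i [_ ij /(prime_rdvdX (p_prime j))].
case/(prime_rdvd_prime (p_prime j) (p_prime i)) => e eU Ee.
by apply: (p_nonassoc ij); exists e.
Qed.

Lemma rdvd_f j : rdivides (p j) f.
Proof.
rewrite (f_cofactor j) -(prednK (a_pos j)) exprS.
by exists (p j ^+ (a j).-1 * cofactor j); ring.
Qed.

Lemma ordPV_u j : ordP (PV (p j)) u = a j.
Proof.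
have uP := uniformizer_PV (p_prime j).
apply: (ordP_eq domA uP).
  by exists 1%N, (kap (cofactor j)); rewrite expr1 mulrC (uAvA pi_ker) (f_cofactor j) !rmorphM !rmorphXn.
move=> [M [y E]]; apply: (@prime_ndvd_cofactor j); apply: PV_kap (p_prime j) _.
exists M, (y * v); apply: (mulIgpow domA uP (k := a j)).
transitivity (v ^+ M * (kap (p j) ^+ a j * kap (cofactor j))); first ring.
rewrite -rmorphXn -rmorphM -polyC_exp -polyCM -(f_cofactor j) -(uAvA pi_ker).
by transitivity ((v ^+ M * u) * v); [ring|rewrite E exprS polyC_exp rmorphXn; ring].
Qed.


Lemma prime_ideal_kap_f (P : A -> Prop) : prime_ideal P -> P (kap f) -> exists j, P (kap (p j)).
Proof.
move=> PP; rewrite f_fact rmorph_prod rmorph_prod => /(prime_ideal_prod PP) [j _].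
by rewrite !rmorphXn => /(prime_idealX PP); exists j.
Qed.

(* Otherwise [P] would contain some [kap (p j)], hence the height-one prime
   [PU (p j)%:P], which does not contain [u]. *)
Lemma height_one_uv (P : A -> Prop) : height_one P -> P u -> ~ P v.
Proof.
move=> HP Pu Pv; have [PP _] := HP; have [[_ [_ PM]] _] := PP.
have [j Pj] : exists j, P (kap (p j)).
  by apply: prime_ideal_kap_f => //; rewrite -(uAvA pi_ker); apply: PM.
have qP := uprimeC (p_prime j); have uq := uniformizer_PU qP.
have sub := locP_embuC_sub pi_surj pi_ker PP.1 (rdvd_f j) Pu Pv Pj.
have EP : P = PU (p j)%:P.
  apply: height_one_eq => //; first exact: locP_prime.
  by exists (kap (p j)); [apply: locP_g|case: uq].
by move: Pu; rewrite EP; exact: (locP_wpow uq (M := 1)).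
Qed.


Lemma height_one_classify (P : A -> Prop) : height_one P ->
  (exists2 q, uprime q & P = PU q) \/ (exists j, P = PV (p j)).
Proof.
move=> HP; case: (classic (P u)) => Pu; last first.
  by left; have := height_one_uA_free f0 pi_surj pi_ker ufdR HP Pu.
right; have [q qP EP] : exists2 q, uprime q & P = locP (uA piv) (embu piv q).
  by have := height_one_uA_free f0 piv_surj piv_ker ufdR HP; rewrite uA_piv; apply; apply: height_one_uv.
have : rdivides (q ^+ 1) f%:P.
  apply/(locdvd_embu piv_surj piv_ker _ _ qP); rewrite -(uAvA piv_ker) vA_piv.
  by apply: locdvdMl; move: Pu; rewrite EP.
rewrite expr1 f_fact rmorph_prod => /(prime_rdvd_big qP.1) [j [_ _]].
rewrite rmorphXn => /(prime_rdvdX qP.1) /(prime_rdvd_prime qP.1 (prime_eltC (p_prime j))) [e eU Ej].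
exists j; rewrite EP PV_piv Ej rmorphM (locP_unitMl _ _ (e' := embu piv e^-1)) //.
by rewrite -rmorphM mulVr ?rmorph1.
Qed.


Lemma height_one_uniformizer (P : A -> Prop) : height_one P ->
  exists w g, uniformizer w g /\ P = locP w g.
Proof.
case/height_one_classify => [[q qP ->]|[j ->]]; do 2 eexists; split; try reflexivity.
  exact: uniformizer_PU.
exact: uniformizer_PV.
Qed.

Lemma ordP_uA_powM (P : A -> Prop) N x : height_one P -> x != 0 ->
  ordP P (u ^+ N * x) = (N * ordP P u + ordP P x)%N.
Proof.
case/height_one_uniformizer => w [g [gP ->]] x0.
have u0 := uA_neq0 pi_ker.
have uN0 : u ^+ N != 0 by rewrite -(embuX pi) -rmorphXn (embu_neq0 pi_ker) ?expf_neq0 ?polyX_eq0.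
by rewrite (ordPM domA gP) // (ordPX domA gP).
Qed.

Lemma principal_divisor_poly D : principal_divisor D ->
  exists c d, [/\ c != 0, d != 0 & forall P, height_one P ->
    D P = (ordP P (embu pi c))%:Z - (ordP P (embu pi d))%:Z].
Proof.
move=> [x [y [x0 [y0 Dxy]]]].
have [N [c Ec]] := uApowM_embu pi_surj pi_ker x; have [M [d Ed]] := uApowM_embu pi_surj pi_ker y.
have Ec' : embu pi ('X ^+ M * c) = u ^+ (M + N) * x by rewrite rmorphM rmorphXn (embuX pi) -Ec exprD; ring.
have Ed' : embu pi ('X ^+ N * d) = u ^+ (M + N) * y by rewrite rmorphM rmorphXn (embuX pi) -Ed exprD; ring.
exists ('X ^+ M * c), ('X ^+ N * d); split.
- by apply: contra_neq x0 => /(congr1 (embu pi)); rewrite Ec' rmorph0 => /(uApow_reg f0 pi_surj pi_ker).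
- by apply: contra_neq y0 => /(congr1 (embu pi)); rewrite Ed' rmorph0 => /(uApow_reg f0 pi_surj pi_ker).
- by move=> P HP; rewrite Ec' Ed' !ordP_uA_powM // Dxy //; lia.
Qed.


Lemma ordP_embu_factor (P : A -> Prop) e al h n : height_one P ->
  e \is a GRing.unit -> h != 0 ->
  ordP P (embu pi (e * 'X ^+ al * h ^+ n)) = (al * ordP P u + n * ordP P (embu pi h))%N.
Proof.
move=> HP eU h0; have [w [g [gP EP]]] := height_one_uniformizer HP.
have e0 : e != 0 by apply: contraTneq eU => ->; rewrite unitr0.
have uh0 : u ^+ al * embu pi (h ^+ n) != 0.
  by rewrite -(embuX pi) -rmorphXn -rmorphM (embu_neq0 pi_ker) ?mulf_neq0 ?expf_neq0 ?polyX_eq0.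
have -> : embu pi (e * 'X ^+ al * h ^+ n) = embu pi e * (u ^+ al * embu pi (h ^+ n)).
  by rewrite !rmorphM rmorphXn (embuX pi) mulrA.
rewrite EP (ordPM domA gP) ?(embu_neq0 pi_ker) // (ordP_unit domA gP (y := embu pi e^-1)).
  rewrite add0n -EP ordP_uA_powM ?(embu_neq0 pi_ker) ?expf_neq0 // EP.
  by rewrite rmorphXn (ordPX domA gP) ?(embu_neq0 pi_ker).
by rewrite -rmorphM mulVr ?rmorph1.
Qed.

(* With [z = c * d ^+ n.-1], the orders of [z] along the primes [PU q] are
   multiples of [n], so [z = e * 'X ^+ al * h ^+ n]. *)
Lemma ordP_root c d n : (0 < n)%N -> c != 0 -> d != 0 ->
  (forall q, uprime q -> exists k : int,
     (ordP (PU q) (embu pi c))%:Z - (ordP (PU q) (embu pi d))%:Z = k * n%:Z) ->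
  exists al h, h != 0 /\ forall P, height_one P ->
    (ordP P (embu pi c))%:Z - (ordP P (embu pi d))%:Z =
    (al * ordP P u)%:Z + n%:Z * ((ordP P (embu pi h))%:Z - (ordP P (embu pi d))%:Z).
Proof.
case: n => // m _ c0 d0 Hdvd; set z := c * d ^+ m.
have z0 : z != 0 by rewrite mulf_neq0 ?expf_neq0.
have ordz P : height_one P ->
    ordP P (embu pi z) = (ordP P (embu pi c) + m * ordP P (embu pi d))%N.
  case/height_one_uniformizer => w [g [gP ->]].
  rewrite rmorphM (ordPM domA gP) ?(embu_neq0 pi_ker) ?expf_neq0 //.
  by rewrite rmorphXn (ordPX domA gP) ?(embu_neq0 pi_ker).
have [|h [e [al [eU Ez]]]] := dvd_ordP_factor f0 pi_surj pi_ker ufdR z0 (ltn0Sn m).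
  move=> q qP; have [k Ek] := Hdvd q qP; rewrite ordz; last exact: height_one_PU.
  by apply: (@dvdn_int _ _ (k + (ordP (PU q) (embu pi d))%:Z)); nia.
have h0 : h != 0 by apply: contraNneq z0 => h0; rewrite Ez h0 expr0n mulr0.
exists al, h; split=> // P HP; have := ordz P HP; rewrite Ez ordP_embu_factor //; lia.
Qed.


Local Notation gcd_a := (\big[gcdn/0]_(i < s) a i).

Lemma s_gt0 : (0 < s)%N.
Proof.
rewrite lt0n; apply/eqP => s0; move: f_nonunit; rewrite f_fact big1 ?unitr1 //.
by move=> i; have := ltn_ord i; move: (nat_of_ord i) => k; rewrite s0.
Qed.

Lemma gcd_a_gt1 : gcd_a != 1%N -> (1 < gcd_a)%N.
Proof.
have : (gcd_a %| a (Ordinal s_gt0))%N by apply: biggcdn_inf.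
have := a_pos (Ordinal s_gt0); case: gcd_a => [|[|d]] //.
by rewrite dvd0n lt0n => /negPf ->.
Qed.

Lemma torsion_free_of_gcd1 : gcd_a = 1%N -> class_group_torsion_free A.
Proof.
move=> g1 D n _ n0 /principal_divisor_poly [c [d [c0 d0 EnD]]].
have [|al [h [h0 Eal]]] := ordP_root n0 c0 d0.
  by move=> q qP; exists (D (PU q)); rewrite -EnD; [lia|exact: height_one_PU].
have /dvdnP [k Ek] : (n %| al)%N.
  apply: (dvdn_biggcd_mul g1) => j; rewrite -ordPV_u.
  have := Eal _ (height_one_PV (p_prime j)); rewrite -EnD; last exact: height_one_PV.
  set oh := ordP _ (embu pi h); set od := ordP _ (embu pi d); set DV := D _.
  have -> : DV *+ n = DV * n%:Z by lia.
  by move=> E; apply: (@dvdn_int _ _ (DV - oh%:Z + od%:Z)); rewrite mulrDl mulrBl E; ring.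
have Xh0 : 'X ^+ k * h != 0 by rewrite mulf_neq0 ?expf_neq0 ?polyX_eq0.
exists (embu pi ('X ^+ k * h)), (embu pi d); split; first exact: embu_neq0.
split=> [|P HP]; first exact: embu_neq0.
rewrite rmorphM rmorphXn (embuX pi) ordP_uA_powM ?(embu_neq0 pi_ker) //.
have := Eal P HP; rewrite -EnD // Ek => E.
apply: (mulIf (x := n%:Z)); first by lia.
have -> : D P * n%:Z = D P *+ n by lia.
by rewrite E !PoszD !PoszM; ring.
Qed.


Lemma ordP_height_one_u_dvd (P : A -> Prop) : height_one P -> (gcd_a %| ordP P u)%N.
Proof.
case/height_one_classify => [[q qP ->]|[j ->]]; first by rewrite ordPU_u.
by rewrite ordPV_u; apply: biggcdn_inf.
Qed.

(* If [d := gcd_a > 1], the divisor [D := div(u) / d] is not principal, since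
   along [PV (p j)] every principal divisor is congruent mod [a j] to one with
   zero [PU]-part, while [D (PV (p j)) = a j %/ d]. *)
Lemma gcd1_of_torsion_free : class_group_torsion_free A -> gcd_a = 1%N.
Proof.
move=> TF; apply/eqP/negP => /negP /gcd_a_gt1 d1; set d := gcd_a in d1.
pose D (P : A -> Prop) : int :=
  if excluded_middle_informative (height_one P) then (ordP P u %/ d)%:Z else 0.
have DP P : height_one P -> D P = (ordP P u %/ d)%:Z.
  by rewrite /D; case: excluded_middle_informative.
have Dsupp P : D P != 0 -> height_one P.
  by rewrite /D; case: excluded_middle_informative; rewrite ?eqxx.
have HD : weil_divisor D.
  split=> //; exists (map (fun j => PV (p j)) (enum 'I_s)) => P DP0.
  have HP := Dsupp P DP0; move: DP0; rewrite DP //.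
  case/height_one_classify: HP => [[q qP ->]|[j ->] _].
    by rewrite ordPU_u // div0n eqxx.
  by apply: In_map_mem; rewrite mem_enum.
have /TF : principal_divisor (fun P => D P *+ d).
  exists u, 1; split; first exact: uA_neq0.
  split=> [|P HP]; first exact: oner_neq0.
  have [w [g [gP EP]]] := height_one_uniformizer HP.
  rewrite DP // -mulr_natr natz -PoszM divnK ?ordP_height_one_u_dvd //.
  by rewrite EP (ordP_unit domA gP (x := 1) (y := 1)) ?mulr1 // subr0.
case/(_ HD (ltnW d1))/principal_divisor_poly => c [e [c0 e0 ED]].
set j := Ordinal s_gt0.
have [|al [h [h0 Eal]]] := ordP_root (a_pos j) c0 e0.
  move=> q qP; have HPU := height_one_PU qP.
  by exists 0; rewrite mul0r -ED // DP // ordPU_u // div0n.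
have : (a j %| a j %/ d)%N.
  have HPV := height_one_PV (p_prime j).
  have := Eal _ HPV; rewrite -ED // DP // ordPV_u => E; apply: (@dvdn_int _ _ (al%:Z + (ordP (PV (p j)) (embu pi h))%:Z
    - (ordP (PV (p j)) (embu pi e))%:Z)).
  by rewrite E PoszM; ring.
have dj : (d %| a j)%N by apply: biggcdn_inf.
have q0 : (0 < a j %/ d)%N by rewrite divn_gt0 ?(ltnW d1) // dvdn_leq.
by move=> /(dvdn_leq q0); rewrite leqNgt ltn_Pdiv ?a_pos.
Qed.


Lemma ordPV_f j : ordP (PV (p j)) (kap f) = a j.
Proof.
have v0 : v != 0 by rewrite -uA_piv; apply: uA_neq0 piv_ker.
rewrite -(uAvA pi_ker) (ordPM domA (uniformizer_PV (p_prime j)) (uA_neq0 pi_ker) v0).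
by rewrite ordPV_u ordPV_v ?addn0.
Qed.

Lemma gcd1_not_proper_power : gcd_a = 1%N ->
  ~ exists (k : nat) (g c : R), (2 <= k)%N /\ c \is a GRing.unit /\ f = c * g ^+ k.
Proof.
move=> g1 [k [g [c [k2 [cU Ef]]]]].
have c0 : c != 0 by apply: contraTneq cU => ->; rewrite unitr0.
have g0 : g != 0 by apply: contraNneq f0 => g0; rewrite Ef g0 expr0n -(subnKC k2) mulr0.
have : (k %| 1)%N.
  rewrite -g1; apply/dvdn_biggcdP => j _; have uP := uniformizer_PV (p_prime j).
  rewrite -ordPV_f Ef polyCM rmorphM (ordPM domA uP) ?(embu_neq0 pi_ker) ?polyC_eq0 ?expf_neq0 //.
  rewrite (ordP_unit domA uP (y := kap c^-1)) ?add0n; last by rewrite -rmorphM -polyCM mulVr // polyC1 rmorph1.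
  by rewrite polyC_exp rmorphXn (ordPX domA uP) ?(embu_neq0 pi_ker) ?polyC_eq0 // dvdn_mulr.
by rewrite dvdn1 => /eqP k1; rewrite k1 in k2.
Qed.

Lemma proper_power_of_gcd : gcd_a != 1%N ->
  exists (k : nat) (g c : R), (2 <= k)%N /\ c \is a GRing.unit /\ f = c * g ^+ k.
Proof.
move=> /gcd_a_gt1 d1; exists gcd_a, (\prod_(i < s) p i ^+ (a i %/ gcd_a)), 1.
do 2!split=> //; first exact: unitr1.
rewrite mul1r -prodrXl f_fact; apply: eq_bigr => i _.
by rewrite -exprM divnK //; apply: biggcdn_inf.
Qed.

End ClassGroup.

Theorem corollary4p5
  (K : closedFieldType) (charK0 : [pchar K] =i pred0)
  (R : idomainType) (iota : {rmorphism K -> R})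
  (fgR : fin_gen_alg iota) (ufdR : factorial_domain R)
  (f : R) (f_nonconst : forall c : K, f != iota c)
  (f_nonunit : f \isn't a GRing.unit)
  (s : nat) (p : 'I_s -> R) (a : 'I_s -> nat)
  (p_prime : forall i, prime_elt (p i))
  (p_nonassoc : forall i j, i != j -> ~ associated (p i) (p j))
  (a_pos : forall i, (0 < a i)%N)
  (f_fact : f = \prod_(i < s) p i ^+ a i)
  (A : comNzRingType) (pi : {rmorphism {poly {poly R}} -> A})
  (pi_surj : forall x : A, exists q, pi q = x)
  (pi_ker : forall q, pi q = 0 <->
     exists h, q = h * ('X%:P * 'X - (f%:P)%:P)) :
  (class_group_torsion_free A <-> (\big[gcdn/0%N]_(i < s) a i = 1)%N) /\
  (class_group_torsion_free A <->
     ~ exists (k : nat) (g c : R), (2 <= k)%N /\ c \is a GRing.unit /\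
         f = c * g ^+ k).
Proof.
have f0 : f != 0 by move: (f_nonconst 0); rewrite rmorph0.
have gcd1_TF := torsion_free_of_gcd1 ufdR f0 pi_surj pi_ker p_prime p_nonassoc a_pos f_nonunit f_fact.
have TF_gcd1 := gcd1_of_torsion_free ufdR f0 pi_surj pi_ker p_prime p_nonassoc a_pos f_nonunit f_fact.
split; first by split.
split=> [/TF_gcd1 g1|not_power].
  exact: (gcd1_not_proper_power ufdR f0 pi_surj pi_ker p_prime p_nonassoc f_fact g1).
apply: gcd1_TF; apply/eqP; apply: contra_notT not_power.
exact: proper_power_of_gcd a_pos f_nonunit f_fact.
Qed.
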